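(* Let $\vec w\in\mathbb R^n$ be $\tau$-regular with $\sum_i (w^{(i)})^2=1$, let $\gamma\in(0,1]$, and let $\mathcal D$ be any distribution on $\{0,1\}^n$. Let $\vec y$ be drawn from the $\gamma$-noisy version $\tilde{\mathcal D}$ of $\mathcal D$. Then for every interval $[a,b]$, $$\Pr\big[\langle \vec w,\vec y\rangle\in[a,b]\big]\le \frac{4|b-a|}{\sqrt\gamma}+\frac{4\tau}{\sqrt\gamma}+2e^{-\gamma^2/(2\tau^2)}.$$
   Context: A vector $\vec w\in\mathbb R^n$ is $\tau$-regular if $\max_i|w^{(i)}|\le \tau\|\vec w\|_2$. For a distribution $\mathcal D$ on $\{0,1\}^n$ and $\gamma\in[0,1]$, the $\gamma$-noisy version $\tilde{\mathcal D}$ is the distribution of $\vec y$ obtained by sampling $\vec x\sim\mathcal D$ and then, independently for each coordinate $i$, setting $y^{(i)}=x^{(i)}$ with probability $1-\gamma$ and $y^{(i)}=$ a fresh uniformly random bit with probability $\gamma$. *)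

From Stdlib Require Import Reals List.
Import ListNotations.
Open Scope R_scope.

Definition sumR (l : list R) : R := fold_right Rplus 0 l.

(* All vectors in {0,1}^n, each represented as a list of n booleans
   (coordinate i = nth i v false; true = 1, false = 0). *)
Fixpoint bitvecs (n : nat) : list (list bool) :=
  match n with
  | O => [[]]
  | S m => flat_map (fun v => [false :: v; true :: v]) (bitvecs m)
  end.

Definition b2R (b : bool) : R := if b then 1 else 0.

Definition dot (w : nat -> R) (y : list bool) : R :=
  sumR (map (fun i => w i * b2R (nth i y false)) (seq 0 (length y))).

Definition sqnorm (n : nat) (w : nat -> R) : R :=
  sumR (map (fun i => w i ^ 2) (seq 0 n)).

Definition regular (n : nat) (tau : R) (w : nat -> R) : Prop :=
  forall i, (i < n)%nat -> Rabs (w i) <= tau * sqrt (sqnorm n w).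

Definition is_distr (n : nat) (D : list bool -> R) : Prop :=
  (forall x, In x (bitvecs n) -> 0 <= D x) /\ sumR (map D (bitvecs n)) = 1.

(* Transition probability P[y | x] of the gamma-noise process: each coordinate
   independently is kept w.p. 1-gamma, or replaced by a uniform bit w.p. gamma;
   hence y_i = x_i w.p. (1-gamma) + gamma/2 and y_i <> x_i w.p. gamma/2. *)
Definition noise_kernel (gamma : R) (x y : list bool) : R :=
  fold_right Rmult 1
    (map (fun p : bool * bool =>
            if Bool.eqb (fst p) (snd p) then (1 - gamma) + gamma / 2 else gamma / 2)
         (combine x y)).

Definition noisy (n : nat) (gamma : R) (D : list bool -> R) (y : list bool) : R :=
  sumR (map (fun x => D x * noise_kernel gamma x y) (bitvecs n)).

Definition prob_in_interval (n : nat) (mu : list bool -> R) (w : nat -> R) (a b : R) : R :=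
  sumR (map (fun y => if Rle_dec a (dot w y) then
                        if Rle_dec (dot w y) b then mu y else 0
                      else 0) (bitvecs n)).

From Stdlib Require Import Reals List Lra Lia Psatz.
Import ListNotations.
Open Scope R_scope.

(* Condition on the point x of D and on the set of resampled coordinates.
   With u the weights of the resampled coordinates, <w, y> is a constant c plus
   the Rademacher sum t = sum_i +-u_i/2, of variance |u|^2/4.  A Stein-type
   argument with the clipped identity f (|f| <= |b - a|/2 + tau, slope 1 on the
   tau-neighbourhood of [a, b]) gives
     |u|^2/4 * Pr[c + t in [a, b]] <= E[t f(c + t)] <= (|b - a|/2 + tau) |u|/2,
   which is anti-concentration once |u|^2 >= gamma/2.  As |u|^2 has mean gamma
   and variance at most gamma tau^2, Chebyshev bounds the probability of
   |u|^2 < gamma/2 by 4 tau^2 / gamma. *)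

Lemma sumR_app (l1 l2 : list R) : sumR (l1 ++ l2) = sumR l1 + sumR l2.
Proof. induction l1 as [|x l1 IH]; simpl; [ring | rewrite IH; ring]. Qed.

Lemma sumR_add {A} (f g : A -> R) (l : list A) :
  sumR (map (fun x => f x + g x) l) = sumR (map f l) + sumR (map g l).
Proof. induction l as [|x l IH]; simpl; [ring | rewrite IH; ring]. Qed.

Lemma sumR_scal {A} (k : R) (f : A -> R) (l : list A) :
  sumR (map (fun x => k * f x) l) = k * sumR (map f l).
Proof. induction l as [|x l IH]; simpl; [ring | rewrite IH; ring]. Qed.

Lemma sumR_ext_in {A} (f g : A -> R) (l : list A) :
  (forall x, In x l -> f x = g x) -> sumR (map f l) = sumR (map g l).
Proof. intros H; rewrite (map_ext_in f g l H); reflexivity. Qed.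

Lemma sumR_le_in {A} (f g : A -> R) (l : list A) :
  (forall x, In x l -> f x <= g x) -> sumR (map f l) <= sumR (map g l).
Proof.
  induction l as [|x l IH]; simpl; intros H; [lra|].
  apply Rplus_le_compat; [apply H | apply IH]; auto.
Qed.

Lemma sumR_exchange {A B} (F : A -> B -> R) (X : list A) (Y : list B) :
  sumR (map (fun y => sumR (map (fun x => F x y) X)) Y)
  = sumR (map (fun x => sumR (map (fun y => F x y) Y)) X).
Proof.
  induction Y as [|y Y IH]; simpl.
  - induction X as [|x X IHX]; simpl; [reflexivity | rewrite <- IHX; ring].
  - rewrite IH, <- sumR_add; reflexivity.
Qed.

Lemma sumR_flat_map {A B} (F : B -> R) (g : A -> list B) (l : list A) :
  sumR (map F (flat_map g l)) = sumR (map (fun v => sumR (map F (g v))) l).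
Proof.
  induction l as [|v l IH]; simpl; [reflexivity|].
  rewrite map_app, sumR_app, IH; reflexivity.
Qed.

Lemma sumR_convex {A} (p f : A -> R) (l : list A) (B : R) :
  (forall x, In x l -> 0 <= p x) -> sumR (map p l) = 1 ->
  (forall x, In x l -> f x <= B) -> sumR (map (fun x => p x * f x) l) <= B.
Proof.
  intros Hp H1 Hf.
  apply Rle_trans with (sumR (map (fun x => B * p x) l)).
  - apply sumR_le_in; intros x Hx.
    rewrite Rmult_comm; apply Rmult_le_compat_r; auto.
  - rewrite sumR_scal, H1; lra.
Qed.

Lemma sumR_bitvecs_S (F : list bool -> R) (m : nat) :
  sumR (map F (bitvecs (S m)))
  = sumR (map (fun v => F (false :: v) + F (true :: v)) (bitvecs m)).
Proof.
  simpl bitvecs; rewrite sumR_flat_map.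
  apply sumR_ext_in; intros; simpl; ring.
Qed.

Lemma bitvecs_length (n : nat) (x : list bool) : In x (bitvecs n) -> length x = n.
Proof.
  revert x; induction n as [|n IH]; simpl; intros x Hx.
  - destruct Hx as [<- | []]; reflexivity.
  - apply in_flat_map in Hx as [v [Hv Hx]].
    destruct Hx as [<- | [<- | []]]; simpl; rewrite (IH v Hv); reflexivity.
Qed.

Lemma sumR_seq_S (g : nat -> R) (m : nat) :
  sumR (map g (seq 1 m)) = sumR (map (fun i => g (S i)) (seq 0 m)).
Proof. rewrite <- seq_shift, map_map; reflexivity. Qed.

Lemma dot_cons (w : nat -> R) (c : bool) (y : list bool) :
  dot w (c :: y) = w 0%nat * b2R c + dot (fun i => w (S i)) y.
Proof. unfold dot; simpl length; rewrite <- cons_seq; simpl; rewrite sumR_seq_S; reflexivity. Qed.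

(* [Erad u F] is the expectation of [F (sum_i s_i u_i / 2)] over independent
   uniform signs [s_i]: the contribution of the resampled coordinates of
   weight [u_i], centred at their mean [u_i / 2]. *)
Fixpoint Erad (u : list R) (F : R -> R) : R :=
  match u with
  | [] => F 0
  | x :: u' => (Erad u' (fun t => F (t + x / 2)) + Erad u' (fun t => F (t - x / 2))) / 2
  end.

Definition sumsq (u : list R) : R := sumR (map (fun x => x ^ 2) u).

Lemma sumsq_cons (x : R) (u : list R) : sumsq (x :: u) = x ^ 2 + sumsq u.
Proof. reflexivity. Qed.

Lemma sumsq_ge0 (u : list R) : 0 <= sumsq u.
Proof.
  induction u as [|x u IH]; [unfold sumsq; simpl; lra|].
  rewrite sumsq_cons; pose proof (pow2_ge_0 x); lra.
Qed.

Lemma Erad_ext (u : list R) (F G : R -> R) :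
  (forall t, F t = G t) -> Erad u F = Erad u G.
Proof.
  revert F G; induction u as [|x u IH]; intros F G H; simpl; [apply H|].
  rewrite (IH (fun t => F (t + x / 2)) (fun t => G (t + x / 2))),
          (IH (fun t => F (t - x / 2)) (fun t => G (t - x / 2))) by (intros; apply H).
  reflexivity.
Qed.

Lemma Erad_lin (u : list R) (k1 k2 : R) (F G : R -> R) :
  Erad u (fun t => k1 * F t + k2 * G t) = k1 * Erad u F + k2 * Erad u G.
Proof.
  revert F G; induction u as [|x u IH]; intros F G; simpl; [reflexivity|].
  rewrite !IH; field.
Qed.

Lemma Erad_const (u : list R) (k : R) : Erad u (fun _ => k) = k.
Proof. induction u as [|x u IH]; simpl; [reflexivity | rewrite !IH; field]. Qed.

Lemma Erad_le (u : list R) (F G : R -> R) :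
  (forall t, F t <= G t) -> Erad u F <= Erad u G.
Proof.
  revert F G; induction u as [|x u IH]; intros F G H; simpl; [apply H|].
  pose proof (IH (fun t => F (t + x / 2)) (fun t => G (t + x / 2)) (fun t => H _)).
  pose proof (IH (fun t => F (t - x / 2)) (fun t => G (t - x / 2)) (fun t => H _)).
  lra.
Qed.

Lemma Erad_sq (u : list R) (al : R) :
  Erad u (fun t => (al + t) ^ 2) = al ^ 2 + sumsq u / 4.
Proof.
  revert al; induction u as [|x u IH]; intros al; cbn [Erad].
  - unfold sumsq; simpl; field.
  - rewrite (Erad_ext u (fun t => (al + (t + x / 2)) ^ 2) (fun t => (al + x / 2 + t) ^ 2))
      by (intros; f_equal; ring).
    rewrite (Erad_ext u (fun t => (al + (t - x / 2)) ^ 2) (fun t => (al - x / 2 + t) ^ 2))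
      by (intros; f_equal; ring).
    rewrite !IH, sumsq_cons; field.
Qed.

(* [Eres g ws Phi], for [ws] the list of pairs (w_i, x_i), is the expectation
   of [Phi c u] when each coordinate is independently resampled with
   probability [g]: a kept coordinate adds [w_i x_i] to [c], a resampled one
   adds its mean [w_i / 2] to [c] and [w_i] to the list [u] of Rademacher
   weights. *)
Fixpoint Eres (g : R) (ws : list (R * R)) (Phi : R -> list R -> R) : R :=
  match ws with
  | [] => Phi 0 []
  | p :: r => (1 - g) * Eres g r (fun c u => Phi (c + fst p * snd p) u)
              + g * Eres g r (fun c u => Phi (c + fst p / 2) (fst p :: u))
  end.

Lemma Eres_ext (g : R) (ws : list (R * R)) (P Q : R -> list R -> R) :
  (forall c u, P c u = Q c u) -> Eres g ws P = Eres g ws Q.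
Proof.
  revert P Q; induction ws as [|p r IH]; intros P Q H; simpl; [apply H|].
  rewrite (IH (fun c u => P (c + fst p * snd p) u) (fun c u => Q (c + fst p * snd p) u)),
          (IH (fun c u => P (c + fst p / 2) (fst p :: u))
              (fun c u => Q (c + fst p / 2) (fst p :: u))) by (intros; apply H).
  reflexivity.
Qed.

Lemma Eres_lin (g : R) (ws : list (R * R)) (k1 k2 : R) (P Q : R -> list R -> R) :
  Eres g ws (fun c u => k1 * P c u + k2 * Q c u) = k1 * Eres g ws P + k2 * Eres g ws Q.
Proof.
  revert P Q; induction ws as [|p r IH]; intros P Q; simpl; [reflexivity|].
  rewrite !IH; ring.
Qed.

Lemma Eres_const (g : R) (ws : list (R * R)) (k : R) : Eres g ws (fun _ _ => k) = k.
Proof. induction ws as [|p r IH]; simpl; [reflexivity | rewrite !IH; ring]. Qed.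

Lemma Eres_le (g : R) (ws : list (R * R)) (Pw : R -> Prop) (P Q : R -> list R -> R) :
  0 <= g <= 1 -> Forall (fun p => Pw (fst p)) ws ->
  (forall c u, Forall Pw u -> P c u <= Q c u) -> Eres g ws P <= Eres g ws Q.
Proof.
  intros Hg; revert P Q; induction ws as [|p r IH]; intros P Q Hws H; simpl.
  - apply H; constructor.
  - inversion Hws as [|? ? Hp Hr]; subst.
    pose proof (IH (fun c u => P (c + fst p * snd p) u) (fun c u => Q (c + fst p * snd p) u)
                   Hr (fun c u Hu => H _ _ Hu)).
    pose proof (IH (fun c u => P (c + fst p / 2) (fst p :: u))
                   (fun c u => Q (c + fst p / 2) (fst p :: u))
                   Hr (fun c u Hu => H _ _ (Forall_cons _ Hp Hu))).
    apply Rplus_le_compat; apply Rmult_le_compat_l; lra.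
Qed.

Definition sum2 (ws : list (R * R)) : R := sumR (map (fun p => fst p ^ 2) ws).
Definition sum4 (ws : list (R * R)) : R := sumR (map (fun p => fst p ^ 4) ws).

Lemma Eres_sq (g : R) (ws : list (R * R)) (al : R) :
  Eres g ws (fun _ u => (al + sumsq u) ^ 2) = (al + g * sum2 ws) ^ 2 + g * (1 - g) * sum4 ws.
Proof.
  revert al; induction ws as [|p r IH]; intros al; cbn [Eres].
  - unfold sum2, sum4, sumsq; simpl; ring.
  - rewrite IH, (Eres_ext g r (fun _ u => (al + sumsq (fst p :: u)) ^ 2)
                            (fun _ u => ((al + fst p ^ 2) + sumsq u) ^ 2))
      by (intros; rewrite sumsq_cons; f_equal; ring).
    rewrite IH; unfold sum2, sum4; simpl; ring.
Qed.

Lemma sum4_le (tau : R) (ws : list (R * R)) :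
  Forall (fun p => Rabs (fst p) <= tau) ws -> sum4 ws <= tau ^ 2 * sum2 ws.
Proof.
  unfold sum4, sum2, sumR; induction ws as [|p r IH]; intros Hws; cbn [map fold_right]; [lra|].
  inversion Hws as [|? ? Hp Hr]; subst; specialize (IH Hr).
  assert (fst p ^ 2 <= tau ^ 2)
    by (rewrite <- (pow2_abs (fst p)); pose proof (Rabs_pos (fst p)); nra).
  assert (fst p ^ 4 <= tau ^ 2 * fst p ^ 2)
    by (replace (fst p ^ 4) with (fst p ^ 2 * fst p ^ 2) by ring;
        apply Rmult_le_compat_r; [apply pow2_ge_0 | lra]).
  lra.
Qed.

(* The variance bound behind Chebyshev: the resampled mass [sumsq u] has mean [g]. *)
Lemma Eres_sumsq_dev_le (g tau : R) (ws : list (R * R)) :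
  0 <= g <= 1 -> Forall (fun p => Rabs (fst p) <= tau) ws -> sum2 ws = 1 ->
  Eres g ws (fun _ u => (sumsq u - g) ^ 2) <= g * tau ^ 2.
Proof.
  intros Hg Hws H2.
  rewrite (Eres_ext g ws (fun _ u => (sumsq u - g) ^ 2) (fun _ u => (- g + sumsq u) ^ 2))
    by (intros; f_equal; ring).
  rewrite Eres_sq, H2.
  pose proof (sum4_le tau ws Hws) as H4; rewrite H2 in H4.
  assert (0 <= sum4 ws).
  { unfold sum4, sumR; clear; induction ws as [|p r IH]; cbn [map fold_right]; [lra|].
    pose proof (pow2_ge_0 (fst p ^ 2)); replace ((fst p ^ 2) ^ 2) with (fst p ^ 4) in * by ring; lra. }
  assert (0 <= g * (1 - g)) by nra.
  nra.
Qed.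

Definition in_itv (a b z : R) : R :=
  if Rle_dec a z then if Rle_dec z b then 1 else 0 else 0.

Lemma in_itv_mul (a b z m : R) :
  (if Rle_dec a z then if Rle_dec z b then m else 0 else 0) = in_itv a b z * m.
Proof. unfold in_itv; destruct Rle_dec; [destruct Rle_dec|]; ring. Qed.

Lemma in_itv_bounds (a b z : R) : 0 <= in_itv a b z <= 1.
Proof. unfold in_itv; destruct Rle_dec; [destruct Rle_dec|]; lra. Qed.

Lemma in_itv_gt0 (a b z : R) : 0 < in_itv a b z -> a <= z <= b.
Proof. unfold in_itv; destruct Rle_dec; [destruct Rle_dec|]; lra. Qed.

Lemma Erad_in_itv_bounds (a b : R) (u : list R) (c : R) :
  0 <= Erad u (fun t => in_itv a b (c + t)) <= 1.
Proof.
  rewrite <- (Erad_const u 0) at 1; rewrite <- (Erad_const u 1).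
  split; apply Erad_le; intros; apply in_itv_bounds.
Qed.

Section AntiConcentration.
Variables (a b tau : R).
Hypothesis tau_ge0 : 0 <= tau.

Definition radius : R := Rabs (b - a) / 2 + tau.

(* The test function of the Stein-type argument. *)
Definition clip (z : R) : R :=
  let d := z - (a + b) / 2 in
  if Rle_dec d (- radius) then - radius else if Rle_dec d radius then d else radius.

Lemma radius_ge0 : 0 <= radius.
Proof. unfold radius; pose proof (Rabs_pos (b - a)); lra. Qed.

Lemma clip_le (z1 z2 : R) : z1 <= z2 -> clip z1 <= clip z2.
Proof. pose proof radius_ge0; unfold clip; intros; repeat destruct Rle_dec; lra. Qed.

Lemma clip_abs_le (z : R) : Rabs (clip z) <= radius.
Proof. pose proof radius_ge0; unfold clip; repeat destruct Rle_dec; apply Rabs_le; lra. Qed.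

Lemma clip_id (z : R) : a <= b -> a - tau <= z <= b + tau -> clip z = z - (a + b) / 2.
Proof.
  intros Hab Hz; unfold clip, radius; rewrite Rabs_right by lra.
  repeat destruct Rle_dec; lra.
Qed.

Lemma clip_increment_ge (x z : R) : Rabs x <= tau ->
  x / 2 * (clip (z + x / 2) - clip (z - x / 2))
  >= x ^ 2 / 4 * (in_itv a b (z + x / 2) + in_itv a b (z - x / 2)).
Proof.
  intros Hx.
  assert (- tau <= x <= tau)
    by (pose proof (Rle_abs x); pose proof (Rle_abs (- x)); rewrite Rabs_Ropp in *; lra).
  pose proof (in_itv_bounds a b (z + x / 2)); pose proof (in_itv_bounds a b (z - x / 2)).
  destruct (Rle_dec (in_itv a b (z + x / 2) + in_itv a b (z - x / 2)) 0).
  - destruct (Rle_dec 0 x).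
    + pose proof (clip_le (z - x / 2) (z + x / 2)); nra.
    + pose proof (clip_le (z + x / 2) (z - x / 2)); nra.
  - assert (Hin : a <= z + x / 2 <= b \/ a <= z - x / 2 <= b)
      by (destruct (Rle_dec (in_itv a b (z + x / 2)) 0);
          [right | left]; apply in_itv_gt0; lra).
    rewrite (clip_id (z + x / 2)), (clip_id (z - x / 2)) by lra.
    nra.
Qed.

(* Stein's identity for a Rademacher sum, in inequality form. *)
Lemma Erad_stein_ge (u : list R) (c : R) : Forall (fun x => Rabs x <= tau) u ->
  Erad u (fun t => t * clip (c + t)) >= sumsq u / 4 * Erad u (fun t => in_itv a b (c + t)).
Proof.
  revert c; induction u as [|x u IH]; intros c Hu; cbn [Erad].
  - unfold sumsq; simpl; lra.
  - inversion Hu as [|? ? Hx Hu']; subst.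
    rewrite (Erad_ext u (fun t => (t + x / 2) * clip (c + (t + x / 2)))
        (fun t => 1 * (t * clip (c + x / 2 + t)) + x / 2 * clip (c + x / 2 + t)))
      by (intros; rewrite (Rplus_comm t), Rplus_assoc; ring).
    rewrite (Erad_ext u (fun t => (t - x / 2) * clip (c + (t - x / 2)))
        (fun t => 1 * (t * clip (c - x / 2 + t)) + - (x / 2) * clip (c - x / 2 + t)))
      by (intros; replace (c + (t - x / 2)) with (c - x / 2 + t) by ring; ring).
    rewrite (Erad_ext u (fun t => in_itv a b (c + (t + x / 2))) (fun t => in_itv a b (c + x / 2 + t)))
      by (intros; f_equal; ring).
    rewrite (Erad_ext u (fun t => in_itv a b (c + (t - x / 2))) (fun t => in_itv a b (c - x / 2 + t)))
      by (intros; f_equal; ring).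
    assert (Hstep : Erad u (fun t => x / 2 * clip (c + x / 2 + t) + - (x / 2) * clip (c - x / 2 + t))
             >= Erad u (fun t => x ^ 2 / 4 * in_itv a b (c + x / 2 + t)
                                 + x ^ 2 / 4 * in_itv a b (c - x / 2 + t))).
    { apply Rle_ge, Erad_le; intros t.
      pose proof (clip_increment_ge x (c + t) Hx).
      replace (c + x / 2 + t) with (c + t + x / 2) by ring.
      replace (c - x / 2 + t) with (c + t - x / 2) by ring; lra. }
    rewrite !Erad_lin in *.
    pose proof (IH (c + x / 2) Hu'); pose proof (IH (c - x / 2) Hu').
    rewrite sumsq_cons; lra.
Qed.

(* [E |t| <= sqrt (E t^2)], via [|t| <= t^2 / (2 s) + s / 2] with [s^2 = E t^2]. *)
Lemma Erad_clip_le (u : list R) (c : R) : 0 < sumsq u ->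
  Erad u (fun t => t * clip (c + t)) <= radius * sqrt (sumsq u / 4).
Proof.
  intros Hq; set (s := sqrt (sumsq u / 4)).
  assert (Hs : 0 < s) by (apply sqrt_lt_R0; lra).
  assert (Hss : s * s = sumsq u / 4) by (apply sqrt_sqrt; lra).
  pose proof radius_ge0.
  apply Rle_trans with (Erad u (fun t => radius / (2 * s) * (0 + t) ^ 2 + radius * s / 2 * 1)).
  - apply Erad_le; intros t.
    assert (t * clip (c + t) <= Rabs t * radius).
    { apply Rle_trans with (Rabs (t * clip (c + t))); [apply Rle_abs|].
      rewrite Rabs_mult; apply Rmult_le_compat_l; [apply Rabs_pos | apply clip_abs_le]. }
    assert (radius / (2 * s) * (0 + t) ^ 2 + radius * s / 2 * 1 - Rabs t * radius
            = radius / (2 * s) * (Rabs t - s) ^ 2)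
      by (rewrite Rplus_0_l, <- (pow2_abs t); field; lra).
    assert (0 <= radius / (2 * s) * (Rabs t - s) ^ 2)
      by (apply Rmult_le_pos; [apply Rle_mult_inv_pos; lra | apply pow2_ge_0]).
    lra.
  - rewrite Erad_lin, Erad_sq, Erad_const, <- Hss; right; field; lra.
Qed.

Lemma Erad_in_itv_anticonc (u : list R) (c : R) :
  Forall (fun x => Rabs x <= tau) u -> 0 < sumsq u ->
  Erad u (fun t => in_itv a b (c + t)) * sqrt (sumsq u / 4) <= radius.
Proof.
  intros Hu Hq; set (p := Erad u (fun t => in_itv a b (c + t))).
  set (s := sqrt (sumsq u / 4)).
  assert (Hs : 0 < s) by (apply sqrt_lt_R0; lra).
  assert (Hss : s * s = sumsq u / 4) by (apply sqrt_sqrt; lra).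
  pose proof (Erad_stein_ge u c Hu) as Hstein; pose proof (Erad_clip_le u c Hq) as Hclip.
  fold p s in Hstein, Hclip.
  apply Rmult_le_reg_r with s; [lra|].
  rewrite Rmult_assoc, Hss; lra.
Qed.

(* Either enough coordinates are resampled and the Rademacher part
   anti-concentrates, or the resampled mass deviates from its mean [g]. *)
Lemma Erad_in_itv_le (u : list R) (c g : R) :
  Forall (fun x => Rabs x <= tau) u -> 0 < g ->
  Erad u (fun t => in_itv a b (c + t)) <= 3 * radius / sqrt g + 4 / g ^ 2 * (sumsq u - g) ^ 2.
Proof.
  intros Hu Hg.
  assert (Hsg : 0 < sqrt g) by (apply sqrt_lt_R0; lra).
  pose proof (Erad_in_itv_bounds a b u c); pose proof radius_ge0.
  assert (0 <= 4 / g ^ 2 * (sumsq u - g) ^ 2)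
    by (apply Rmult_le_pos; [apply Rle_mult_inv_pos; [lra | apply pow_lt; lra] | apply pow2_ge_0]).
  assert (0 <= 3 * radius / sqrt g) by (apply Rle_mult_inv_pos; lra).
  destruct (Rle_dec (g / 2) (sumsq u)) as [Hq | Hq].
  - pose proof (Erad_in_itv_anticonc u c Hu ltac:(lra)).
    assert (sqrt g <= 3 * sqrt (sumsq u / 4)).
    { rewrite <- (sqrt_square 3) by lra; rewrite <- sqrt_mult by lra.
      apply sqrt_le_1; lra. }
    assert (Erad u (fun t => in_itv a b (c + t)) * sqrt g <= 3 * radius) by nra.
    apply Rmult_le_reg_r with (sqrt g); [lra|].
    unfold Rdiv; rewrite Rmult_plus_distr_r, (Rmult_assoc _ (/ _)), Rinv_l by lra.
    assert (0 <= 4 * / g ^ 2 * (sumsq u - g) ^ 2 * sqrt g) by (unfold Rdiv in *; nra).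
    lra.
  - pose proof (sumsq_ge0 u).
    assert (g ^ 2 / 4 <= (sumsq u - g) ^ 2) by nra.
    assert (1 <= 4 / g ^ 2 * (sumsq u - g) ^ 2).
    { apply Rmult_le_reg_r with (g ^ 2 / 4); [nra|].
      replace (4 / g ^ 2 * (sumsq u - g) ^ 2 * (g ^ 2 / 4)) with ((sumsq u - g) ^ 2)
        by (field; lra).
      lra. }
    lra.
Qed.

End AntiConcentration.

Fixpoint weight_bits (w : nat -> R) (x : list bool) : list (R * R) :=
  match x with
  | [] => []
  | c :: x' => (w 0%nat, b2R c) :: weight_bits (fun i => w (S i)) x'
  end.

Lemma sum2_weight_bits (w : nat -> R) (x : list bool) :
  sum2 (weight_bits w x) = sqnorm (length x) w.
Proof.
  revert w; induction x as [|c x IH]; intros w; [reflexivity|].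
  unfold sqnorm in *; simpl length; rewrite <- cons_seq.
  unfold sum2 in *; simpl; rewrite IH, sumR_seq_S; reflexivity.
Qed.

Lemma weight_bits_abs_le (tau : R) (w : nat -> R) (x : list bool) :
  (forall i, (i < length x)%nat -> Rabs (w i) <= tau) ->
  Forall (fun p => Rabs (fst p) <= tau) (weight_bits w x).
Proof.
  revert w; induction x as [|c x IH]; intros w H; simpl; constructor.
  - apply H; simpl; lia.
  - apply IH; intros i Hi; apply H; simpl; lia.
Qed.

Lemma noise_kernel_cons (g : R) (c : bool) (x : list bool) (c' : bool) (y : list bool) :
  noise_kernel g (c :: x) (c' :: y)
  = (if Bool.eqb c c' then (1 - g) + g / 2 else g / 2) * noise_kernel g x y.
Proof. reflexivity. Qed.

(* Resampling a coordinate of weight [w0] contributes [w0 / 2 +- w0 / 2], that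
   is [w0 * b] for a uniform bit [b]. *)
Lemma Eres_cons_weight_bit (g w0 : R) (c : bool) (ws : list (R * R)) (G : R -> R) :
  let H b := Eres g ws (fun c0 u => Erad u (fun t => G (w0 * b2R b + (c0 + t)))) in
  Eres g ((w0, b2R c) :: ws) (fun c0 u => Erad u (fun t => G (c0 + t)))
  = (1 - g) * H c + g / 2 * H true + g / 2 * H false.
Proof.
  intros H; cbn [Eres fst snd].
  rewrite (Eres_ext g ws (fun c0 u => Erad u (fun t => G (c0 + w0 * b2R c + t)))
             (fun c0 u => Erad u (fun t => G (w0 * b2R c + (c0 + t)))))
    by (intros; apply Erad_ext; intros; f_equal; ring).
  rewrite (Eres_ext g ws (fun c0 u => Erad (w0 :: u) (fun t => G (c0 + w0 / 2 + t)))
             (fun c0 u => / 2 * Erad u (fun t => G (w0 * b2R true + (c0 + t)))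
                          + / 2 * Erad u (fun t => G (w0 * b2R false + (c0 + t))))).
  - rewrite Eres_lin; unfold H; field.
  - intros c0 u; cbn [b2R Erad].
    rewrite (Erad_ext u (fun t => G (c0 + w0 / 2 + (t + w0 / 2))) (fun t => G (w0 * 1 + (c0 + t))))
      by (intros; f_equal; field).
    rewrite (Erad_ext u (fun t => G (c0 + w0 / 2 + (t - w0 / 2))) (fun t => G (w0 * 0 + (c0 + t))))
      by (intros; f_equal; field).
    field.
Qed.

Lemma noise_kernel_Eres (g : R) (x : list bool) (w : nat -> R) (G : R -> R) :
  sumR (map (fun y => G (dot w y) * noise_kernel g x y) (bitvecs (length x)))
  = Eres g (weight_bits w x) (fun c u => Erad u (fun t => G (c + t))).
Proof.
  revert w G; induction x as [|c x IH]; intros w G.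
  - simpl; unfold dot, noise_kernel; simpl; rewrite Rmult_1_r, !Rplus_0_r; reflexivity.
  - simpl length; rewrite sumR_bitvecs_S; cbn [weight_bits].
    rewrite Eres_cons_weight_bit; cbv zeta.
    rewrite <- (IH _ (fun z => G (w 0%nat * b2R c + z))),
            <- (IH _ (fun z => G (w 0%nat * b2R true + z))),
            <- (IH _ (fun z => G (w 0%nat * b2R false + z))).
    rewrite (sumR_ext_in _
      (fun y => (if Bool.eqb c false then (1 - g) + g / 2 else g / 2)
                * (G (w 0%nat * b2R false + dot (fun i => w (S i)) y) * noise_kernel g x y)
              + (if Bool.eqb c true then (1 - g) + g / 2 else g / 2)
                * (G (w 0%nat * b2R true + dot (fun i => w (S i)) y) * noise_kernel g x y)))
      by (intros; rewrite !dot_cons, !noise_kernel_cons; ring).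
    rewrite sumR_add, !sumR_scal.
    destruct c; cbn [Bool.eqb]; ring.
Qed.

Lemma prob_in_interval_noise_kernel (n : nat) (g : R) (x : list bool) (w : nat -> R) (a b : R) :
  length x = n ->
  prob_in_interval n (noise_kernel g x) w a b
  = Eres g (weight_bits w x) (fun c u => Erad u (fun t => in_itv a b (c + t))).
Proof.
  intros <-; rewrite <- noise_kernel_Eres; unfold prob_in_interval.
  apply sumR_ext_in; intros; apply in_itv_mul.
Qed.

Lemma prob_in_interval_mixture (n : nat) (D : list bool -> R) (K : list bool -> list bool -> R)
    (w : nat -> R) (a b : R) :
  prob_in_interval n (fun y => sumR (map (fun x => D x * K x y) (bitvecs n))) w a b
  = sumR (map (fun x => D x * prob_in_interval n (K x) w a b) (bitvecs n)).
Proof.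
  unfold prob_in_interval.
  rewrite (sumR_ext_in _ (fun y => sumR (map (fun x => D x * (in_itv a b (dot w y) * K x y))
                                              (bitvecs n))))
    by (intros; rewrite in_itv_mul, <- sumR_scal; apply sumR_ext_in; intros; ring).
  rewrite sumR_exchange; apply sumR_ext_in; intros.
  rewrite <- sumR_scal; apply sumR_ext_in; intros; rewrite in_itv_mul; reflexivity.
Qed.

(* If [tau >= sqrt g / 4] the right-hand side exceeds 1, otherwise
   [4 tau^2 / g <= tau / sqrt g]. *)
Lemma noise_bound_of_chebyshev (P X tau g e : R) :
  0 < g -> 0 <= X -> 0 <= tau -> 0 < e -> P <= 1 ->
  P <= 3 * (X / 2 + tau) / sqrt g + 4 * tau ^ 2 / g ->
  P <= 4 * X / sqrt g + 4 * tau / sqrt g + 2 * e.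
Proof.
  intros Hg HX Ht He H1 H2.
  set (r := sqrt g) in *.
  assert (Hr : 0 < r) by (apply sqrt_lt_R0; lra).
  assert (Hrr : r * r = g) by (apply sqrt_sqrt; lra).
  set (q := tau / r); set (Y := X / r).
  assert (0 <= q) by (apply Rle_mult_inv_pos; lra).
  assert (0 <= Y) by (apply Rle_mult_inv_pos; lra).
  replace (3 * (X / 2 + tau) / r + 4 * tau ^ 2 / g) with (3 / 2 * Y + 3 * q + 4 * q ^ 2) in H2
    by (unfold q, Y; rewrite <- Hrr; field; lra).
  replace (4 * X / r + 4 * tau / r + 2 * e) with (4 * Y + 4 * q + 2 * e)
    by (unfold q, Y; field; lra).
  destruct (Rle_dec (1 / 4) q); nra.
Qed.

Lemma prob_in_interval_noise_kernel_le (n : nat) (tau : R) (w : nat -> R) (g a b : R)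
    (x : list bool) :
  0 <= tau -> 0 < g <= 1 -> (forall i, (i < n)%nat -> Rabs (w i) <= tau) ->
  sqnorm n w = 1 -> length x = n ->
  prob_in_interval n (noise_kernel g x) w a b
    <= 4 * Rabs (b - a) / sqrt g + 4 * tau / sqrt g + 2 * exp (- (g ^ 2) / (2 * tau ^ 2)).
Proof.
  intros Ht Hg Hw Hn Hx.
  rewrite prob_in_interval_noise_kernel by exact Hx.
  set (ws := weight_bits w x).
  assert (Hws : Forall (fun p => Rabs (fst p) <= tau) ws)
    by (apply weight_bits_abs_le; rewrite Hx; exact Hw).
  assert (H2 : sum2 ws = 1) by (unfold ws; rewrite sum2_weight_bits, Hx; exact Hn).
  assert (Hg' : 0 <= g <= 1) by lra.
  apply noise_bound_of_chebyshev with (g := g);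
    [lra | apply Rabs_pos | lra | apply exp_pos | |].
  - rewrite <- (Eres_const g ws 1).
    apply (Eres_le g ws (fun y => Rabs y <= tau) _ _ Hg' Hws); intros c u _; exact (proj2 (Erad_in_itv_bounds a b u c)).
  - apply Rle_trans with
      (Eres g ws (fun _ u => 3 * radius a b tau / sqrt g * 1 + 4 / g ^ 2 * (sumsq u - g) ^ 2)).
    + apply (Eres_le g ws (fun y => Rabs y <= tau) _ _ Hg' Hws); intros c u Hu.
      rewrite Rmult_1_r; apply Erad_in_itv_le; [exact Ht | exact Hu | lra].
    + rewrite Eres_lin, Eres_const.
      pose proof (Eres_sumsq_dev_le g tau ws Hg' Hws H2).
      assert (4 / g ^ 2 * Eres g ws (fun _ u => (sumsq u - g) ^ 2) <= 4 * tau ^ 2 / g).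
      { apply Rle_trans with (4 / g ^ 2 * (g * tau ^ 2)).
        - apply Rmult_le_compat_l; [apply Rle_mult_inv_pos; [lra | apply pow_lt; lra] | lra].
        - right; field; lra. }
      unfold radius; lra.
Qed.

Theorem lemma2p3 (n : nat) (tau : R) (w : nat -> R) (gamma : R)
  (D : list bool -> R) (a b : R) :
  regular n tau w ->
  sqnorm n w = 1 ->
  0 < gamma <= 1 ->
  is_distr n D ->
  prob_in_interval n (noisy n gamma D) w a b
    <= 4 * Rabs (b - a) / sqrt gamma + 4 * tau / sqrt gamma
       + 2 * exp (- (gamma ^ 2) / (2 * tau ^ 2)).
Proof.
  intros Hreg Hn Hg [HD0 HD1].
  assert (Hw : forall i, (i < n)%nat -> Rabs (w i) <= tau).
  { intros i Hi; pose proof (Hreg i Hi) as H; rewrite Hn, sqrt_1, Rmult_1_r in H; exact H. }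
  assert (Ht : 0 <= tau).
  { destruct n as [|n]; [unfold sqnorm in Hn; simpl in Hn; lra|].
    pose proof (Hw 0%nat ltac:(lia)); pose proof (Rabs_pos (w 0%nat)); lra. }
  unfold noisy; rewrite prob_in_interval_mixture.
  apply sumR_convex; [exact HD0 | exact HD1 |].
  intros x Hx; apply prob_in_interval_noise_kernel_le; auto.
  exact (bitvecs_length n x Hx).
Qed.
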